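(* Let $n\ge1$. If $f,g,h:\Omega_n\to\mathbb{R}$ have mutually disjoint supports, then $(f+g+h)^\wedge=(f+g)^\wedge+(f+h)^\wedge+(g+h)^\wedge-\widehat{f}-\widehat{g}-\widehat{h}$.
   Context: $\Omega_n=\{\omega_0,\dots,\omega_{2^n-1}\}$ is the set of strings $\alpha_0\alpha_1\cdots\alpha_n$ with $\alpha_k\in\{0,1\}$, $\alpha_0=0$ ($\omega_j$ being the binary representation of $j$). For $u:\Omega_n\to[0,\infty)$, $\widehat{u}$ is the $2^n\times2^n$ matrix with entries $\widehat{u}_{jk}=\min[u(\omega_j),u(\omega_k)]$. For arbitrary $f:\Omega_n\to\mathbb{R}$, write $f=f^+-f^-$ with $f^+,f^-\ge0$, $f^+f^-=0$, and set $\widehat{f}=\widehat{f^+}-\widehat{f^-}$; $(f)^\wedge$ means $\widehat{f}$. *)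

From HB Require Import structures.
From mathcomp Require Import all_boot all_order all_algebra.
From mathcomp Require Import reals.
Set Implicit Arguments. Unset Strict Implicit. Unset Printing Implicit Defensive.
Import Order.TTheory GRing.Theory Num.Theory.
Local Open Scope ring_scope.

(* Omega_n = {omega_0, ..., omega_(2^n - 1)}, omega_j the binary string of j
   (length n+1, leading digit 0).  We identify omega_j with its index j,
   so Omega_n is represented by the ordinal type 'I_(2^n). *)
Definition Omega (n : nat) : finType := 'I_(2 ^ n).

Definition pos_part {R : realType} n (f : Omega n -> R) : Omega n -> R :=
  fun x => Num.max (f x) 0.
Definition neg_part {R : realType} n (f : Omega n -> R) : Omega n -> R :=
  fun x => Num.max (- f x) 0.

Definition hat_nonneg {R : realType} n (u : Omega n -> R) : 'M[R]_(2 ^ n) :=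
  \matrix_(j, k) Num.min (u j) (u k).

Definition hat {R : realType} n (f : Omega n -> R) : 'M[R]_(2 ^ n) :=
  hat_nonneg (pos_part f) - hat_nonneg (neg_part f).

Definition supp {R : realType} n (f : Omega n -> R) : {set Omega n} :=
  [set x | f x != 0].

From HB Require Import structures.
From mathcomp Require Import all_boot all_order all_algebra.
From mathcomp Require Import reals.
From mathcomp Require Import ring.
Set Implicit Arguments. Unset Strict Implicit.
Import Order.TTheory GRing.Theory Num.Theory.
Local Open Scope ring_scope.

(* Entry (j, k) of hat F depends only on F j and F k, through a function E
   vanishing as soon as one argument is 0.  Such an E is additive in each
   argument over sums of terms at most one of which is nonzero, so both sides
   expand into the nine terms E (f j) (f k), E (f j) (g k), ...; each
   off-diagonal term occurs in exactly one pair sum on the right, and each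
   diagonal term in two of them, minus once. *)

Section ZeroAbsorbing.

Variables (V : zmodType) (W : comPzRingType) (E : V -> V -> W).
Hypotheses (E0l : forall b, E 0 b = 0) (E0r : forall a, E a 0 = 0).

Lemma zero_or_addl (a1 a2 a3 : V) :
  a1 = 0 \/ a3 = 0 -> a2 = 0 \/ a3 = 0 -> a1 + a2 = 0 \/ a3 = 0.
Proof. by move=> [-> | ->]; [case=> [->|->]; [left; rewrite addr0 | right] | right]. Qed.

Lemma zero_absorbing_addl (a1 a2 b : V) :
  a1 = 0 \/ a2 = 0 -> E (a1 + a2) b = E a1 b + E a2 b.
Proof. by move=> [-> | ->]; rewrite ?add0r ?addr0 E0l ?add0r ?addr0. Qed.

Lemma zero_absorbing_addr (a b1 b2 : V) :
  b1 = 0 \/ b2 = 0 -> E a (b1 + b2) = E a b1 + E a b2.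
Proof. by move=> [-> | ->]; rewrite ?add0r ?addr0 E0r ?add0r ?addr0. Qed.

Lemma zero_absorbing_incl_excl3 (a1 a2 a3 b1 b2 b3 : V) :
  a1 = 0 \/ a2 = 0 -> a1 = 0 \/ a3 = 0 -> a2 = 0 \/ a3 = 0 ->
  b1 = 0 \/ b2 = 0 -> b1 = 0 \/ b3 = 0 -> b2 = 0 \/ b3 = 0 ->
  E (a1 + a2 + a3) (b1 + b2 + b3) =
    E (a1 + a2) (b1 + b2) + E (a1 + a3) (b1 + b3) + E (a2 + a3) (b2 + b3)
    - E a1 b1 - E a2 b2 - E a3 b3.
Proof.
move=> a12 a13 a23 b12 b13 b23.
have a12_3 := zero_or_addl a13 a23; have b12_3 := zero_or_addl b13 b23.
rewrite !zero_absorbing_addl // !zero_absorbing_addr //.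
ring.
Qed.

End ZeroAbsorbing.

Definition hat_entry {R : realType} (a b : R) : R :=
  Num.min (Num.max a 0) (Num.max b 0) - Num.min (Num.max (- a) 0) (Num.max (- b) 0).

Lemma hatE {R : realType} n (F : Omega n -> R) j k : hat F j k = hat_entry (F j) (F k).
Proof. by rewrite /hat !mxE. Qed.

Lemma hat_entry0l {R : realType} (b : R) : hat_entry 0 b = 0.
Proof.
rewrite /hat_entry oppr0 maxxx.
by rewrite !min_l ?subrr // le_max lexx orbT.
Qed.

Lemma hat_entry0r {R : realType} (a : R) : hat_entry a 0 = 0.
Proof.
rewrite /hat_entry oppr0 maxxx.
by rewrite !min_r ?subrr // le_max lexx orbT.
Qed.

Lemma disjoint_suppP {R : realType} n (f g : Omega n -> R) :
  [disjoint supp f & supp g] -> forall x, f x = 0 \/ g x = 0.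
Proof.
move=> /pred0P fg x; have := fg x; rewrite /= !inE.
by case: (eqVneq (f x) 0) => [|_ /eqP]; auto.
Qed.

Theorem lemma5p4 (R : realType) (n : nat) (f g h : Omega n -> R) :
  (0 < n)%N ->
  [disjoint supp f & supp g] ->
  [disjoint supp f & supp h] ->
  [disjoint supp g & supp h] ->
  hat (fun x => f x + g x + h x) =
    hat (fun x => f x + g x) + hat (fun x => f x + h x) + hat (fun x => g x + h x)
    - hat f - hat g - hat h.
Proof.
move=> _ /disjoint_suppP fg /disjoint_suppP fh /disjoint_suppP gh.
apply/matrixP => j k; rewrite !(hatE, mxE).
exact: (zero_absorbing_incl_excl3 (W := R) (@hat_entry0l R) (@hat_entry0r R)
  (fg j) (fh j) (gh j) (fg k) (fh k) (gh k)).
Qed.
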